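(* The output $x_T$ of Algorithm 1 satisfies $\mathbb{E}[f_\mu(x_T)]\le -(1-5\epsilon)\,\mathrm{OPT}$, where the expectation is over the random choices $t_0,\dots,t_{T-1}$.
   Context: Standing setup: $A\in\mathbb{R}^{m\times n}_{\ge 0}$ has no zero column and is normalized so that $\min_{i\in[n]}\|A_{:i}\|_\infty=1$, where $A_{:i}$ denotes the $i$-th column. The packing LP is $\max\{\mathbf 1^Tx: x\ge 0,\ Ax\le \mathbf 1\}$ with optimal value $\mathrm{OPT}$. $\epsilon\in(0,1/2]$. $\log$ is the natural logarithm unless written $\log_2$. $\mu=\frac{\epsilon}{4\log(nm/\epsilon)}$, $p_j(x)=\exp\big(\frac{1}{\mu}((Ax)_j-1)\big)$ for $j\in[m]$, and $f_\mu(x)=-\mathbf 1^Tx+\mu\sum_{j=1}^m p_j(x)$ for $x\ge 0$; its gradient is $\nabla_i f_\mu(x)=-1+\sum_j A_{ji}p_j(x)\ge -1$. Algorithm 1: set $\alpha=\mu/20$, $w=\lceil\log_2(1/\epsilon)\rceil$, $T=\lceil 10w\log(2n)/(\alpha\epsilon)\rceil$, and $x_0[i]=\frac{1-\epsilon/2}{n\|A_{:i}\|_\infty}$ for $i\in[n]$. For $k=0,\dots,T-1$: choose $t_k\in\{0,\dots,w-1\}$ uniformly at random, independently of the past; writing $g_i=\nabla_i f_\mu(x_k)$, define $\xi_k[i]=0$ if $|g_i|\le\epsilon$, $\xi_k[i]=g_i$ if $\epsilon<|g_i|\le 1$, $\xi_k[i]=1$ if $g_i>1$; for $t\in\{0,\dots,w-1\}$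 define $\xi^{(t)}_k[i]=\xi_k[i]$ if $\epsilon2^t<|\xi_k[i]|\le\epsilon2^{t+1}$ and $\xi^{(t)}_k[i]=0$ otherwise; set $x^{(t)}_{k+1}[i]=x_k[i]\exp(-\alpha\,\xi^{(t)}_k[i])$ and $x_{k+1}=x^{(t_k)}_{k+1}$. Output $x_T$. *)

From Stdlib Require Import Reals Lra Lia ZArith.
Open Scope R_scope.

Fixpoint rsum (k : nat) (f : nat -> R) : R :=
  match k with O => 0 | S k' => rsum k' f + f k' end.

Fixpoint rmaxk (k : nat) (f : nat -> R) : R :=
  match k with O => 0 | S O => f O | S k' => Rmax (rmaxk k' f) (f k') end.

(* ceiling of a real, as a natural number (negative values -> 0) *)
Definition Rceil (y : R) : Z := (1 - up (- y))%Z.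
Definition nceil (y : R) : nat := Z.to_nat (Rceil y).

Definition log2 (y : R) : R := ln y / ln 2.

(* A : matrix given by entries A j i, j < m (rows), i < n (columns). *)
Definition colnorm (m : nat) (A : nat -> nat -> R) (i : nat) : R :=
  rmaxk m (fun j => Rabs (A j i)).

Definition feasible (m n : nat) (A : nat -> nat -> R) (x : nat -> R) : Prop :=
  (forall i, (i < n)%nat -> 0 <= x i) /\
  (forall j, (j < m)%nat -> rsum n (fun i => A j i * x i) <= 1).

Definition is_OPT (m n : nat) (A : nat -> nat -> R) (OPT : R) : Prop :=
  (forall x, feasible m n A x -> rsum n x <= OPT) /\
  (exists x, feasible m n A x /\ rsum n x = OPT).

Section Alg.
Variables (m n : nat) (A : nat -> nat -> R) (eps : R).

Definition mu : R := eps / (4 * ln (INR n * INR m / eps)).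

Definition pj (x : nat -> R) (j : nat) : R :=
  exp (/ mu * (rsum n (fun i => A j i * x i) - 1)).

Definition f_mu (x : nat -> R) : R :=
  - rsum n x + mu * rsum m (fun j => pj x j).

Definition grad (x : nat -> R) (i : nat) : R :=
  -1 + rsum m (fun j => A j i * pj x j).

Definition alpha : R := mu / 20.
Definition w : nat := nceil (log2 (/ eps)).
Definition T : nat :=
  nceil (10 * INR w * ln (2 * INR n) / (alpha * eps)).

Definition x0 (i : nat) : R := (1 - eps / 2) / (INR n * colnorm m A i).

Definition xi (x : nat -> R) (i : nat) : R :=
  let g := grad x i in
  if Rle_dec (Rabs g) eps then 0
  else if Rle_dec g 1 then g else 1.

Definition xi_t (t : nat) (x : nat -> R) (i : nat) : R :=
  let v := xi x i in
  if Rlt_dec (eps * 2 ^ t) (Rabs v) then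
    (if Rle_dec (Rabs v) (eps * 2 ^ (S t)) then v else 0)
  else 0.

Definition step (t : nat) (x : nat -> R) (i : nat) : R :=
  x i * exp (- alpha * xi_t t x i).

(* expected value of f_mu after k more iterations started from x, where each
   iteration picks t uniformly in {0,..,w-1} independently *)
Fixpoint expect_f (k : nat) (x : nat -> R) : R :=
  match k with
  | O => f_mu x
  | S k' => / INR w * rsum w (fun t => expect_f k' (step t x))
  end.

End Alg.

(* Algorithm 1 is a multiplicative-weights (mirror descent) method on the
   smoothed objective [f_mu], whose truncated gradient [xi] is split into [w]
   dyadic buckets, one of which is applied per step.  The invariant
   [f_mu x <= 0] forces every row of [A x] below [1 + eps], so a step changes
   each row by at most [3 alpha]; a second-order expansion of the penalty then
   gives the descent [f_mu x' <= f_mu x - alpha/3 * sum_i x_i xi_i g_i].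
   Comparing with [u = (1 - eps/2) x*], convexity of [f_mu] and the mirror
   descent estimate for [Phi_u x = sum_i (x_i - u_i ln x_i)] show that
   [alpha (f_mu x - f_mu u) - O(eps OPT)] is paid for by the expected decrease
   of [Phi_u + 4 f_mu] in one random step.  Telescoping over [T] steps and
   bounding the total decrease of that potential by [O(OPT ln n)] gives the
   bound, since [alpha T >= 10 w ln(2n) / eps]. *)

From Stdlib Require Import Reals Lra Lia.
Open Scope R_scope.

Lemma rsum_ext k f g : (forall i, (i < k)%nat -> f i = g i) -> rsum k f = rsum k g.
Proof.
  induction k as [|k IH]; intros H; simpl; [reflexivity|].
  rewrite IH by (intros; apply H; lia). rewrite H by lia. reflexivity.
Qed.

Lemma rsum_le k f g : (forall i, (i < k)%nat -> f i <= g i) -> rsum k f <= rsum k g.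
Proof.
  induction k as [|k IH]; intros H; simpl; [lra|].
  apply Rplus_le_compat; [apply IH; intros; apply H|apply H]; lia.
Qed.

Lemma rsum_plus k f g : rsum k (fun i => f i + g i) = rsum k f + rsum k g.
Proof. induction k as [|k IH]; simpl; [|rewrite IH]; lra. Qed.

Lemma rsum_minus k f g : rsum k (fun i => f i - g i) = rsum k f - rsum k g.
Proof. induction k as [|k IH]; simpl; [|rewrite IH]; lra. Qed.

Lemma rsum_opp k f : rsum k (fun i => - f i) = - rsum k f.
Proof. induction k as [|k IH]; simpl; [|rewrite IH]; lra. Qed.

Lemma rsum_scal k c f : rsum k (fun i => c * f i) = c * rsum k f.
Proof. induction k as [|k IH]; simpl; [|rewrite IH]; lra. Qed.

Lemma rsum_const k c : rsum k (fun _ => c) = INR k * c.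
Proof. induction k as [|k IH]; simpl rsum; [simpl|rewrite IH, S_INR]; lra. Qed.

Lemma rsum_nonneg k f : (forall i, (i < k)%nat -> 0 <= f i) -> 0 <= rsum k f.
Proof.
  intros H. rewrite <- (Rmult_0_r (INR k)), <- rsum_const. apply rsum_le; assumption.
Qed.

Lemma rsum_swap a b F :
  rsum a (fun i => rsum b (fun j => F i j)) = rsum b (fun j => rsum a (fun i => F i j)).
Proof.
  induction a as [|a IH]; simpl.
  - rewrite rsum_const; simpl; lra.
  - rewrite IH, <- rsum_plus. reflexivity.
Qed.

Lemma rsum_ge_term k f i :
  (forall i, (i < k)%nat -> 0 <= f i) -> (i < k)%nat -> f i <= rsum k f.
Proof.
  induction k as [|k IH]; intros H Hi; [lia|]. simpl.
  assert (Hk : 0 <= f k) by (apply H; lia).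
  destruct (Nat.eq_dec i k) as [->|Hne].
  - assert (0 <= rsum k f) by (apply rsum_nonneg; intros; apply H; lia). lra.
  - assert (f i <= rsum k f) by (apply IH; [intros; apply H|]; lia). lra.
Qed.

Lemma Rabs_rsum_le k f : Rabs (rsum k f) <= rsum k (fun i => Rabs (f i)).
Proof.
  induction k as [|k IH]; simpl; [rewrite Rabs_R0; lra|].
  eapply Rle_trans; [apply Rabs_triang|lra].
Qed.

Lemma rsum_indicator k i0 F : (i0 < k)%nat ->
  rsum k (fun i => F i * (if Nat.eq_dec i i0 then 1 else 0)) = F i0.
Proof.
  induction k as [|k IH]; intros Hi0; [lia|]. simpl.
  destruct (Nat.eq_dec k i0) as [<-|Hne].
  - rewrite (rsum_ext k _ (fun _ => 0)), rsum_const; [ring|].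
    intros i Hi. destruct (Nat.eq_dec i k); [lia|ring].
  - rewrite IH by lia. ring.
Qed.

(* Lagrange's identity: the double sum of [wt i * wt j * (z i - z j)^2] is
   [2 * (S0 * S2 - S1^2)]. *)
Lemma rsum_Cauchy_Schwarz k wt z : (forall i, (i < k)%nat -> 0 <= wt i) ->
  rsum k (fun i => wt i * z i) ^ 2 <= rsum k wt * rsum k (fun i => wt i * z i ^ 2).
Proof.
  intros Hw.
  set (S0 := rsum k wt). set (S1 := rsum k (fun i => wt i * z i)).
  set (S2 := rsum k (fun i => wt i * z i ^ 2)).
  assert (Hrow : forall i, rsum k (fun j => wt i * wt j * (z i - z j) ^ 2)
                           = wt i * z i ^ 2 * S0 - 2 * (wt i * z i) * S1 + wt i * S2).
  { intros i. unfold S0, S1, S2. rewrite <- !rsum_scal, <- rsum_minus, <- rsum_plus.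
    apply rsum_ext; intros; ring. }
  assert (Hsum : rsum k (fun i => rsum k (fun j => wt i * wt j * (z i - z j) ^ 2))
                 = 2 * (S0 * S2 - S1 ^ 2)).
  { rewrite (rsum_ext k _ (fun i => S0 * (wt i * z i ^ 2) - 2 * S1 * (wt i * z i) + S2 * wt i))
      by (intros; rewrite Hrow; ring).
    rewrite rsum_plus, rsum_minus, !rsum_scal. unfold S0, S1, S2. ring. }
  assert (0 <= rsum k (fun i => rsum k (fun j => wt i * wt j * (z i - z j) ^ 2))).
  { apply rsum_nonneg; intros i Hi; apply rsum_nonneg; intros j Hj.
    apply Rmult_le_pos; [apply Rmult_le_pos; auto|apply pow2_ge_0]. }
  lra.
Qed.

Lemma Rabs_le_inv x a : Rabs x <= a -> - a <= x <= a.
Proof. unfold Rabs; destruct (Rcase_abs x); lra. Qed.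

(* [exp y = exp (y/2)^2] and [exp (y/2) <= 1 / (1 - y/2)]. *)
Lemma exp_le_quadratic y : Rabs y <= 1/4 -> exp y <= 1 + y + y ^ 2.
Proof.
  intros Hy; apply Rabs_le_inv in Hy.
  set (a := exp (y / 2)).
  assert (Ha : 0 < a) by apply exp_pos.
  assert (Hsq : exp y = a * a) by (unfold a; rewrite <- exp_plus; f_equal; lra).
  assert (Hhalf : a * (1 - y / 2) <= 1).
  { assert (Hinv : a * exp (- (y / 2)) = 1)
      by (unfold a; rewrite <- exp_plus, Rplus_opp_r; apply exp_0).
    pose proof (exp_ineq1_le (- (y / 2))). nra. }
  assert (Hsq_half : a * a * (1 - y / 2) ^ 2 <= 1).
  { assert (0 <= a * (1 - y / 2)) by (apply Rmult_le_pos; lra).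
    replace (a * a * (1 - y / 2) ^ 2) with ((a * (1 - y / 2)) * (a * (1 - y / 2))) by ring.
    nra. }
  assert (Hpoly : 1 <= (1 + y + y ^ 2) * (1 - y / 2) ^ 2) by nra.
  rewrite Hsq. apply (Rmult_le_reg_r ((1 - y / 2) ^ 2)); nra.
Qed.

Lemma exp_tangent_le a b : exp a * (1 + (b - a)) <= exp b.
Proof.
  replace (exp b) with (exp a * exp (b - a)) by (rewrite <- exp_plus; f_equal; ring).
  apply Rmult_le_compat_l; [left; apply exp_pos|apply exp_ineq1_le].
Qed.

Lemma expm1_bounds a : Rabs a <= 1/4 -> - a <= exp (- a) - 1 <= - a + a ^ 2.
Proof.
  intros Ha. pose proof (exp_ineq1_le (- a)).
  assert (Hopp : Rabs (- a) <= 1/4) by (rewrite Rabs_Ropp; assumption).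
  pose proof (exp_le_quadratic (- a) Hopp). split; nra.
Qed.

Lemma Rabs_expm1_le a : Rabs a <= 1/4 -> Rabs (exp (- a) - 1) <= 2 * Rabs a.
Proof.
  intros Ha. destruct (expm1_bounds a Ha) as [Hlo Hhi].
  pose proof (Rabs_le_inv _ _ Ha). pose proof (Rabs_pos a).
  assert (a ^ 2 <= Rabs a) by (rewrite <- pow2_abs; nra).
  apply Rabs_le. assert (- Rabs a <= a <= Rabs a) by (apply Rabs_le_inv; lra). lra.
Qed.

Lemma expm1_mul_le a g : Rabs a <= 1/4 -> (exp (- a) - 1) * g <= - a * g + a ^ 2 * Rabs g.
Proof.
  intros Ha. destruct (expm1_bounds a Ha) as [Hlo Hhi].
  assert (0 <= a ^ 2) by apply pow2_ge_0.
  destruct (Rle_lt_dec 0 g) as [Hg|Hg].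
  - rewrite Rabs_right by lra. nra.
  - rewrite Rabs_left by lra. nra.
Qed.

Lemma exp_le_exp a b : a <= b -> exp a <= exp b.
Proof. intros [Hab| ->]; [left; apply exp_increasing|right]; auto. Qed.

Lemma ln_le_ln a b : 0 < a -> a <= b -> ln a <= ln b.
Proof. intros Ha [Hab|<-]; [left; apply ln_increasing|right]; auto. Qed.

Lemma ln_nonneg a : 1 <= a -> 0 <= ln a.
Proof. intros. rewrite <- ln_1. apply ln_le_ln; lra. Qed.

Lemma ln_le_sub1 x : 0 < x -> ln x <= x - 1.
Proof. intros Hx. pose proof (exp_ineq1_le (ln x)). rewrite exp_ln in H; lra. Qed.

Lemma ln_le_half y : 0 < y -> ln y <= y / 2.
Proof.
  intros Hy. rewrite <- (ln_exp (y / 2)). apply ln_le_ln; [assumption|].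
  replace (exp (y / 2)) with (exp (y / 4) * exp (y / 4)) by (rewrite <- exp_plus; f_equal; lra).
  pose proof (exp_ineq1_le (y / 4)).
  assert (y <= (1 + y / 4) * (1 + y / 4)) by (pose proof (pow2_ge_0 (1 - y / 4)); nra).
  assert ((1 + y / 4) * (1 + y / 4) <= exp (y / 4) * exp (y / 4))
    by (apply Rmult_le_compat; lra).
  lra.
Qed.

Lemma half_le_ln2 : 1/2 <= ln 2.
Proof. pose proof ln_lt_2. lra. Qed.

Lemma nceil_ge y : y <= INR (nceil y).
Proof.
  unfold nceil, Rceil. destruct (archimed (- y)) as [H1 H2].
  rewrite INR_IZR_INZ, ZifyInst.of_nat_to_nat_eq.
  apply (Rle_trans _ (IZR (1 - up (- y)))); [rewrite minus_IZR; simpl; lra|].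
  apply IZR_le; lia.
Qed.

Lemma rmaxk_ge k f j : (j < k)%nat -> f j <= rmaxk k f.
Proof.
  induction k as [|[|k] IH]; intros Hj; [lia| |].
  - replace j with 0%nat by lia. simpl; lra.
  - change (rmaxk (S (S k)) f) with (Rmax (rmaxk (S k) f) (f (S k))).
    destruct (Nat.eq_dec j (S k)) as [->|Hne]; [apply Rmax_r|].
    eapply Rle_trans; [apply IH; lia|apply Rmax_l].
Qed.

Lemma rmaxk_attained k f : (1 <= k)%nat -> exists j, (j < k)%nat /\ rmaxk k f = f j.
Proof.
  induction k as [|[|k] IH]; intros Hk; [lia|exists 0%nat; auto|].
  change (rmaxk (S (S k)) f) with (Rmax (rmaxk (S k) f) (f (S k))).
  destruct (IH ltac:(lia)) as [j [Hj Ej]]. unfold Rmax.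
  destruct (Rle_dec (rmaxk (S k) f) (f (S k))); [exists (S k)|exists j]; split; auto; lia.
Qed.

Section IteratedAverage.
Context {X : Type}.
Variables (W : nat) (stp : nat -> X -> X) (inv : X -> Prop).
Hypothesis HW : 1 <= INR W.
Hypothesis inv_step : forall t x, inv x -> inv (stp t x).

Definition avg (F : nat -> R) := / INR W * rsum W F.

Lemma rsum_avg F : rsum W F = INR W * avg F.
Proof. unfold avg. field. lra. Qed.

Lemma avg_le F G : (forall t, (t < W)%nat -> F t <= G t) -> avg F <= avg G.
Proof.
  intros H. apply Rmult_le_compat_l; [left; apply Rinv_0_lt_compat; lra|]. apply rsum_le, H.
Qed.

Lemma avg_const c : avg (fun _ => c) = c.
Proof. unfold avg. rewrite rsum_const. field. lra. Qed.

Lemma avg_ext F G : (forall t, F t = G t) -> avg F = avg G.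
Proof. intros H. unfold avg. f_equal. apply rsum_ext; intros; apply H. Qed.

Lemma avg_affine p q F : avg (fun t => p * F t + q) = p * avg F + q.
Proof. unfold avg. rewrite rsum_plus, rsum_scal, rsum_const. field. lra. Qed.

Lemma avg_lin a b F G : avg (fun t => a * F t + b * G t) = a * avg F + b * avg G.
Proof. unfold avg. rewrite rsum_plus, !rsum_scal. ring. Qed.

Fixpoint iter_avg (k : nat) (h : X -> R) (x : X) : R :=
  match k with
  | O => h x
  | S k' => avg (fun t => iter_avg k' h (stp t x))
  end.

Lemma iter_avg_ext k h1 h2 x : (forall y, h1 y = h2 y) -> iter_avg k h1 x = iter_avg k h2 x.
Proof.
  intros H. revert x; induction k as [|k IH]; intros x; simpl; [apply H|].
  apply avg_ext; intros; apply IH.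
Qed.

Lemma iter_avg_lin k a b h1 h2 x :
  iter_avg k (fun y => a * h1 y + b * h2 y) x = a * iter_avg k h1 x + b * iter_avg k h2 x.
Proof.
  revert x; induction k as [|k IH]; intros x; simpl; [reflexivity|].
  rewrite <- avg_lin. unfold avg. f_equal. apply rsum_ext; intros; apply IH.
Qed.

Lemma iter_avg_ge B h : (forall y, inv y -> B <= h y) ->
  forall k x, inv x -> B <= iter_avg k h x.
Proof.
  intros Hh k; induction k as [|k IH]; intros x Hx; simpl; [auto|].
  rewrite <- (avg_const B). apply avg_le; intros t _. apply IH, inv_step, Hx.
Qed.

Lemma iter_avg_le h : (forall t y, inv y -> h (stp t y) <= h y) ->
  forall k x, inv x -> iter_avg k h x <= h x.
Proof.
  intros Hh k; induction k as [|k IH]; intros x Hx; simpl; [lra|].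
  rewrite <- (avg_const (h x)). apply avg_le; intros t _.
  eapply Rle_trans; [apply IH, inv_step, Hx|apply Hh, Hx].
Qed.

(* Telescoping: since [h] is nonincreasing, the excess of the [k+1]-st average
   is at most the excess at [x], which the first step pays for. *)
Lemma iter_avg_drift a c h Psi :
  0 < a ->
  (forall t y, inv y -> h (stp t y) <= h y) ->
  (forall y, inv y -> a * (h y - c) <= rsum W (fun t => Psi y - Psi (stp t y))) ->
  forall k x, inv x -> a * INR k * (iter_avg k h x - c) <= INR W * (Psi x - iter_avg k Psi x).
Proof.
  intros Ha Hmono Hpay k; induction k as [|k IH]; intros x Hx; [simpl; lra|].
  set (G := avg (fun t => Psi (stp t x))).
  assert (Hrest : a * INR k * (iter_avg (S k) h x - c) <= INR W * (G - iter_avg (S k) Psi x)).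
  { pose proof (avg_le _ _ (fun t _ => IH (stp t x) (inv_step t x Hx))) as H.
    rewrite (avg_ext _ (fun t => a * INR k * iter_avg k h (stp t x) + - (a * INR k * c)))
      in H by (intros; ring).
    rewrite (avg_ext (fun t => INR W * _)
               (fun t => INR W * Psi (stp t x) + - INR W * iter_avg k Psi (stp t x)))
      in H by (intros; ring).
    rewrite avg_affine, avg_lin in H. simpl iter_avg. unfold G. lra. }
  assert (Hstep : a * (h x - c) <= INR W * (Psi x - G)).
  { eapply Rle_trans; [apply Hpay, Hx|]. rewrite rsum_avg.
    rewrite (avg_ext _ (fun t => -1 * Psi (stp t x) + Psi x)) by (intros; ring).
    rewrite avg_affine. unfold G. lra. }
  assert (Hdec : a * iter_avg (S k) h x <= a * h x)
    by (apply Rmult_le_compat_l; [lra|apply iter_avg_le; assumption]).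
  rewrite S_INR. lra.
Qed.

End IteratedAverage.

Section Packing.
Variables (m n : nat) (A : nat -> nat -> R) (eps : R).
Hypothesis Heps : 0 < eps <= 1/2.
Hypothesis HA : forall j i, (j < m)%nat -> (i < n)%nat -> 0 <= A j i.
Hypothesis Hm : (1 <= m)%nat.
Hypothesis Hn : (1 <= n)%nat.
Hypothesis Hcol : forall i, (i < n)%nat -> 1 <= colnorm m A i.

Notation MU := (mu m n eps).
Notation AL := (alpha m n eps).
Notation W := (w eps).
Notation f := (f_mu m n A eps).
Notation g := (grad m n A eps).
Notation P := (pj m n A eps).
Notation XI := (xi m n A eps).
Notation XIt := (xi_t m n A eps).
Notation stp := (step m n A eps).

Definition nm_eps := INR n * INR m / eps.

Lemma INR_n_ge1 : 1 <= INR n.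
Proof. apply (le_INR 1); assumption. Qed.

Lemma INR_m_ge1 : 1 <= INR m.
Proof. apply (le_INR 1); assumption. Qed.

Lemma nm_eps_ge : 2 * INR n * INR m <= nm_eps.
Proof.
  pose proof INR_n_ge1; pose proof INR_m_ge1.
  assert (2 <= / eps) by (apply (Rmult_le_reg_r eps); [lra|rewrite Rinv_l; lra]).
  unfold nm_eps, Rdiv. assert (0 <= INR n * INR m) by nra. nra.
Qed.

Lemma nm_eps_ge2 : 2 <= nm_eps.
Proof. pose proof nm_eps_ge; pose proof INR_n_ge1; pose proof INR_m_ge1. nra. Qed.

Lemma ln_nm_eps_ge : 1/2 <= ln nm_eps.
Proof.
  eapply Rle_trans; [apply half_le_ln2|]. apply ln_le_ln; pose proof nm_eps_ge2; lra.
Qed.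

Lemma mu_pos : 0 < MU.
Proof. pose proof ln_nm_eps_ge. apply Rdiv_lt_0_compat; fold nm_eps; lra. Qed.

Lemma mu_le : MU <= eps / 2.
Proof.
  pose proof ln_nm_eps_ge. unfold mu; fold nm_eps.
  apply (Rmult_le_reg_r (4 * ln nm_eps)); [lra|]. field_simplify; nra.
Qed.

Lemma alpha_pos : 0 < AL.
Proof. pose proof mu_pos. unfold alpha. lra. Qed.

Lemma alpha_le : AL <= 1/80.
Proof. pose proof mu_le. unfold alpha. lra. Qed.

Lemma exp_half_eps_div_mu : exp (eps / MU / 2) = nm_eps ^ 2.
Proof.
  pose proof ln_nm_eps_ge. pose proof nm_eps_ge2.
  replace (eps / MU / 2) with (ln nm_eps + ln nm_eps) by (unfold mu; fold nm_eps; field; lra).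
  rewrite exp_plus, exp_ln by lra. ring.
Qed.

Lemma exp_eps_div_mu : exp (eps / MU) = nm_eps ^ 4.
Proof.
  replace (eps / MU) with (eps / MU / 2 + eps / MU / 2) by lra.
  rewrite exp_plus, exp_half_eps_div_mu. ring.
Qed.

Lemma n_le_exp_eps_div_mu : INR n <= exp (eps / MU).
Proof.
  rewrite exp_eps_div_mu. pose proof nm_eps_ge; pose proof nm_eps_ge2.
  pose proof INR_n_ge1; pose proof INR_m_ge1.
  assert (1 <= nm_eps ^ 3) by (apply pow_R1_Rle; lra). simpl in *. nra.
Qed.

(* [mu >= eps / (2 nm_eps)] because [ln y <= y / 2]. *)
Lemma two_n_le_mu_exp_eps_div_mu : 2 * INR n <= MU * exp (eps / MU).
Proof.
  rewrite exp_eps_div_mu. pose proof nm_eps_ge2. pose proof INR_n_ge1; pose proof INR_m_ge1.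
  assert (Hln : ln nm_eps <= nm_eps / 2) by (apply ln_le_half; lra).
  pose proof ln_nm_eps_ge.
  assert (Hmu : eps / (2 * nm_eps) <= MU).
  { unfold mu; fold nm_eps. unfold Rdiv. apply Rmult_le_compat_l; [lra|].
    apply Rinv_le_contravar; lra. }
  assert (Hval : eps / (2 * nm_eps) * nm_eps ^ 4 = INR n * INR m * nm_eps ^ 2 / 2)
    by (unfold nm_eps; field; lra).
  assert (4 <= nm_eps ^ 2) by (simpl; nra).
  assert (INR n <= INR n * INR m) by nra.
  assert (INR n * INR m * nm_eps ^ 2 / 2 >= 2 * INR n) by nra.
  assert (eps / (2 * nm_eps) * nm_eps ^ 4 <= MU * nm_eps ^ 4)
    by (apply Rmult_le_compat_r; [apply pow_le|]; lra).
  lra.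
Qed.

Lemma w_ge1 : 1 <= INR W.
Proof.
  pose proof (nceil_ge (log2 (/ eps))) as Hw. fold W in Hw. unfold log2 in Hw.
  pose proof half_le_ln2.
  assert (ln 2 <= ln (/ eps))
    by (apply ln_le_ln; [lra|apply (Rmult_le_reg_r eps); [lra|rewrite Rinv_l; lra]]).
  eapply Rle_trans; [|apply Hw].
  apply (Rmult_le_reg_r (ln 2)); [lra|]. unfold Rdiv. rewrite Rmult_assoc, Rinv_l; lra.
Qed.

Lemma eps_pow_w_ge1 : 1 <= eps * 2 ^ W.
Proof.
  pose proof (nceil_ge (log2 (/ eps))) as Hw. fold W in Hw. unfold log2 in Hw.
  pose proof half_le_ln2.
  assert (Hle : ln (/ eps) <= INR W * ln 2).
  { apply (Rmult_le_reg_r (/ ln 2)); [apply Rinv_0_lt_compat; lra|].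
    rewrite Rmult_assoc, Rinv_r, Rmult_1_r by lra. exact Hw. }
  rewrite <- Rpower_pow by lra. unfold Rpower.
  assert (Hexp : / eps <= exp (INR W * ln 2)).
  { rewrite <- (exp_ln (/ eps)) at 1 by (apply Rinv_0_lt_compat; lra).
    apply exp_le_exp, Hle. }
  apply (Rmult_le_compat_l eps) in Hexp; [|lra]. rewrite Rinv_r in Hexp; lra.
Qed.

Lemma colnorm_attained i : (i < n)%nat -> exists j, (j < m)%nat /\ A j i = colnorm m A i.
Proof.
  intros Hi. destruct (rmaxk_attained m (fun j => Rabs (A j i)) Hm) as [j [Hj E]].
  exists j; split; auto. unfold colnorm. rewrite E, Rabs_right; auto. apply Rle_ge, HA; auto.
Qed.

Lemma entry_le_colnorm i j : (i < n)%nat -> (j < m)%nat -> A j i <= colnorm m A i.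
Proof.
  intros Hi Hj. eapply Rle_trans; [apply Rle_abs|].
  apply (rmaxk_ge _ (fun j => Rabs (A j i)) j Hj).
Qed.

Lemma pj_pos x j : 0 < P x j.
Proof. apply exp_pos. Qed.

Lemma grad_ge x i : (i < n)%nat -> -1 <= g x i.
Proof.
  intros Hi. unfold grad.
  assert (0 <= rsum m (fun j => A j i * P x j)); [|lra].
  apply rsum_nonneg; intros j Hj. apply Rmult_le_pos; [apply HA; auto|left; apply pj_pos].
Qed.

Lemma xi_cases x i : (i < n)%nat ->
  (XI x i = 0 /\ Rabs (g x i) <= eps) \/ (XI x i = 1 /\ 1 < g x i) \/
  (XI x i = g x i /\ eps < Rabs (g x i) <= 1).
Proof.
  intros Hi. pose proof (grad_ge x i Hi). unfold xi.
  destruct (Rle_dec (Rabs (g x i)) eps); [left; auto|].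
  destruct (Rle_dec (g x i) 1); [right; right|right; left; split; auto; lra].
  split; [reflexivity|split; [lra|apply Rabs_le; lra]].
Qed.

Lemma xi_t_cases t x i : (i < n)%nat ->
  XIt t x i = 0 \/ (XIt t x i = 1 /\ 1 < g x i) \/ (XIt t x i = g x i /\ Rabs (g x i) <= 1).
Proof.
  intros Hi.
  assert (Hsel : XIt t x i = 0 \/ XIt t x i = XI x i)
    by (unfold xi_t; destruct Rlt_dec; [destruct Rle_dec|]; auto).
  destruct Hsel as [E|E]; [left; exact E|]. rewrite E.
  destruct (xi_cases x i Hi) as [[E1 _]|[[E1 H1]|[E1 [_ H1]]]]; rewrite E1; auto.
Qed.

Lemma Rabs_xi_t_le1 t x i : (i < n)%nat -> Rabs (XIt t x i) <= 1.
Proof.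
  intros Hi. destruct (xi_t_cases t x i Hi) as [E|[[E _]|[E H]]]; rewrite E; auto.
  - rewrite Rabs_R0; lra.
  - rewrite Rabs_R1; lra.
Qed.

Lemma xi_t_sq_le t x i : (i < n)%nat -> XIt t x i ^ 2 <= XIt t x i * g x i.
Proof. intros Hi. destruct (xi_t_cases t x i Hi) as [E|[[E H]|[E H]]]; rewrite E; nra. Qed.

Lemma xi_t_sq_abs_grad_le t x i : (i < n)%nat ->
  XIt t x i ^ 2 * Rabs (g x i) <= XIt t x i * g x i.
Proof.
  intros Hi. pose proof (Rabs_pos (g x i)).
  destruct (xi_t_cases t x i Hi) as [E|[[E Hg]|[E Hg]]]; rewrite E.
  - nra.
  - rewrite Rabs_right; lra.
  - assert (0 <= (1 - Rabs (g x i)) * g x i ^ 2) by (apply Rmult_le_pos; [lra|apply pow2_ge_0]).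
    nra.
Qed.

Lemma xi_t_sq_grad1_le t x i : (i < n)%nat ->
  XIt t x i ^ 2 * (g x i + 1) <= 2 * (XIt t x i * g x i).
Proof.
  intros Hi. destruct (xi_t_cases t x i Hi) as [E|[[E H]|[E H]]]; rewrite E.
  - nra.
  - nra.
  - apply Rabs_le_inv in H. assert (0 <= g x i ^ 2) by apply pow2_ge_0. nra.
Qed.

Lemma rsum_xi_t_buckets x i k : rsum k (fun t => XIt t x i) =
  if Rlt_dec eps (Rabs (XI x i)) then
    if Rle_dec (Rabs (XI x i)) (eps * 2 ^ k) then XI x i else 0
  else 0.
Proof.
  induction k as [|k IH]; simpl rsum.
  - simpl. destruct Rlt_dec; [destruct Rle_dec|]; auto; lra.
  - rewrite IH. unfold xi_t. set (v := XI x i).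
    assert (1 <= 2 ^ k) by (apply pow_R1_Rle; lra). change (2 ^ S k) with (2 * 2 ^ k).
    destruct (Rlt_dec eps (Rabs v)), (Rle_dec (Rabs v) (eps * 2 ^ k)),
      (Rlt_dec (eps * 2 ^ k) (Rabs v)), (Rle_dec (Rabs v) (eps * (2 * 2 ^ k)));
      try lra; nra.
Qed.

Lemma rsum_xi_t x i : (i < n)%nat -> rsum W (fun t => XIt t x i) = XI x i.
Proof.
  intros Hi. rewrite rsum_xi_t_buckets. pose proof eps_pow_w_ge1.
  destruct (xi_cases x i Hi) as [[E _]|[[E _]|[E [H1 H2]]]]; rewrite E.
  - destruct Rlt_dec; [destruct Rle_dec|]; auto.
  - rewrite Rabs_R1. destruct Rlt_dec; [destruct Rle_dec|]; auto; lra.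
  - destruct Rlt_dec; [destruct Rle_dec|]; auto; lra.
Qed.

Definition row x j := rsum n (fun i => A j i * x i).

Definition admissible x := (forall i, (i < n)%nat -> 0 < x i) /\ f x <= 0.

Lemma pj_row x j : P x j = exp (/ MU * (row x j - 1)).
Proof. reflexivity. Qed.

Lemma coord_le_row x i : (forall i, (i < n)%nat -> 0 <= x i) -> (i < n)%nat ->
  exists j, (j < m)%nat /\ x i <= row x j.
Proof.
  intros Hx Hi. destruct (colnorm_attained i Hi) as [j [Hj E]]. exists j; split; auto.
  pose proof (Hcol i Hi). pose proof (Hx i Hi).
  apply (Rle_trans _ (A j i * x i)); [nra|].
  apply (rsum_ge_term n (fun i => A j i * x i)); auto.
  intros k Hk. apply Rmult_le_pos; auto.
Qed.

Lemma mu_pj_le_sum x j : admissible x -> (j < m)%nat -> MU * P x j <= rsum n x.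
Proof.
  intros [_ Hf] Hj. unfold f_mu in Hf. pose proof mu_pos.
  assert (P x j <= rsum m (fun j => P x j))
    by (apply rsum_ge_term; auto; intros; left; apply pj_pos).
  nra.
Qed.

(* If the largest row were [1 + eps + d] with [d > 0], its penalty would give
   [sum x >= mu exp(eps/mu) (1 + d/mu) >= 2n + n d], whereas every coordinate of
   [x] is at most that row, so [sum x <= n (1 + eps + d)]. *)
Lemma row_le_of_admissible x : admissible x -> forall j, (j < m)%nat -> row x j <= 1 + eps.
Proof.
  intros Hadm j Hj. set (M := rmaxk m (row x)).
  assert (HjM : row x j <= M) by (apply rmaxk_ge; auto).
  destruct (rmaxk_attained m (row x) Hm) as [js [Hjs EM]]. fold M in EM.
  assert (Hsum : rsum n x <= INR n * M).
  { rewrite <- rsum_const. apply rsum_le; intros i Hi.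
    destruct (coord_le_row x i (fun i Hi => Rlt_le _ _ (proj1 Hadm i Hi)) Hi) as [k [Hk Hxk]].
    eapply Rle_trans; [apply Hxk|apply rmaxk_ge; auto]. }
  pose proof (mu_pj_le_sum x js Hadm Hjs) as Hpen. rewrite pj_row, <- EM in Hpen.
  destruct (Rle_dec M (1 + eps)) as [HM|HM]; [lra|exfalso].
  set (d := M - 1 - eps). pose proof mu_pos.
  pose proof two_n_le_mu_exp_eps_div_mu. pose proof n_le_exp_eps_div_mu. pose proof INR_n_ge1.
  assert (Hsplit : exp (/ MU * (M - 1)) = exp (eps / MU) * exp (d / MU))
    by (rewrite <- exp_plus; f_equal; unfold d; field; lra).
  pose proof (exp_ineq1_le (d / MU)).
  assert (MU * exp (/ MU * (M - 1)) >= MU * exp (eps / MU) + exp (eps / MU) * d).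
  { rewrite Hsplit.
    replace (MU * exp (eps / MU) + exp (eps / MU) * d) with (MU * (exp (eps / MU) * (1 + d / MU)))
      by (field; lra).
    apply Rle_ge, Rmult_le_compat_l; [lra|].
    apply Rmult_le_compat_l; [left; apply exp_pos|lra]. }
  assert (exp (eps / MU) * d >= INR n * d) by (unfold d in *; nra).
  assert (INR n * M = INR n * (1 + eps) + INR n * d) by (unfold d; ring).
  nra.
Qed.

Lemma rsum_pj_row x c :
  rsum m (fun j => P x j * row c j) = rsum n (fun i => c i * (g x i + 1)).
Proof.
  transitivity (rsum m (fun j => rsum n (fun i => P x j * (A j i * c i)))).
  { apply rsum_ext; intros; unfold row; rewrite rsum_scal; reflexivity. }
  rewrite rsum_swap. apply rsum_ext; intros i Hi. unfold grad.
  replace (-1 + rsum m (fun j => A j i * P x j) + 1) with (rsum m (fun j => A j i * P x j)) by ring.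
  rewrite <- rsum_scal. apply rsum_ext; intros; ring.
Qed.

Lemma admissible_nonneg x : admissible x -> forall i, (i < n)%nat -> 0 <= x i.
Proof. intros [Hx _] i Hi. left; apply Hx; assumption. Qed.

Definition progress t x := rsum n (fun i => x i * XIt t x i * g x i).

Lemma progress_nonneg t x : (forall i, (i < n)%nat -> 0 <= x i) -> 0 <= progress t x.
Proof.
  intros Hx. apply rsum_nonneg; intros i Hi. rewrite Rmult_assoc.
  apply Rmult_le_pos; [auto|]. pose proof (xi_t_sq_le t x i Hi). pose proof (pow2_ge_0 (XIt t x i)).
  lra.
Qed.

Lemma step_sub t x i : stp t x i - x i = x i * (exp (- (AL * XIt t x i)) - 1).
Proof. unfold step. replace (- AL * XIt t x i) with (- (AL * XIt t x i)) by ring. ring. Qed.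

Lemma Rabs_alpha_xi_t_le t x i : (i < n)%nat -> Rabs (AL * XIt t x i) <= AL.
Proof.
  intros Hi. pose proof alpha_pos. pose proof (Rabs_xi_t_le1 t x i Hi).
  rewrite Rabs_mult, Rabs_right by lra. nra.
Qed.

Lemma Rabs_row_change_le t x j : (forall i, (i < n)%nat -> 0 <= x i) -> (j < m)%nat ->
  Rabs (row (fun i => stp t x i - x i) j)
    <= 2 * AL * rsum n (fun i => A j i * x i * Rabs (XIt t x i)).
Proof.
  intros Hx Hj. eapply Rle_trans; [apply Rabs_rsum_le|].
  rewrite <- rsum_scal. apply rsum_le; intros i Hi.
  pose proof (HA j i Hj Hi). pose proof (Hx i Hi). pose proof alpha_le.
  rewrite step_sub, !Rabs_mult, (Rabs_right (A j i)), (Rabs_right (x i)) by lra.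
  assert (Hexp : Rabs (exp (- (AL * XIt t x i)) - 1) <= 2 * (AL * Rabs (XIt t x i))).
  { pose proof (Rabs_alpha_xi_t_le t x i Hi). pose proof alpha_pos.
    rewrite <- (Rabs_right AL) at 2 by lra. rewrite <- Rabs_mult.
    apply Rabs_expm1_le. lra. }
  assert (0 <= A j i * x i) by nra. nra.
Qed.

Lemma weighted_abs_xi_t_le_row t x j : (forall i, (i < n)%nat -> 0 <= x i) -> (j < m)%nat ->
  rsum n (fun i => A j i * x i * Rabs (XIt t x i)) <= row x j.
Proof.
  intros Hx Hj. apply rsum_le; intros i Hi.
  pose proof (HA j i Hj Hi). pose proof (Hx i Hi). pose proof (Rabs_xi_t_le1 t x i Hi).
  assert (0 <= A j i * x i) by nra. nra.
Qed.

Lemma row_change_sq_le t x j : admissible x -> (j < m)%nat ->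
  row (fun i => stp t x i - x i) j ^ 2 <= 6 * AL ^ 2 * row (fun i => x i * XIt t x i ^ 2) j.
Proof.
  intros Hadm Hj. pose proof (admissible_nonneg x Hadm) as Hx.
  set (Z := rsum n (fun i => A j i * x i * Rabs (XIt t x i))).
  set (Q := row (fun i => x i * XIt t x i ^ 2) j).
  assert (Hwt : forall i, (i < n)%nat -> 0 <= A j i * x i)
    by (intros i Hi; apply Rmult_le_pos; auto).
  assert (HZ : 0 <= Z) by (apply rsum_nonneg; intros i Hi; pose proof (Rabs_pos (XIt t x i));
                          apply Rmult_le_pos; auto).
  assert (HQ : 0 <= Q)
    by (apply rsum_nonneg; intros i Hi; pose proof (pow2_ge_0 (XIt t x i)); pose proof (Hwt i Hi);
        rewrite <- Rmult_assoc; apply Rmult_le_pos; auto).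
  assert (HCS : Z ^ 2 <= row x j * Q).
  { unfold Z, Q, row. rewrite (rsum_ext n (fun i => A j i * (x i * XIt t x i ^ 2))
                                 (fun i => A j i * x i * Rabs (XIt t x i) ^ 2))
      by (intros; rewrite pow2_abs; ring).
    apply rsum_Cauchy_Schwarz; assumption. }
  assert (Hrow : row x j <= 3/2) by (pose proof (row_le_of_admissible x Hadm j Hj); lra).
  pose proof (Rabs_row_change_le t x j Hx Hj) as HD. fold Z in HD.
  pose proof alpha_pos.
  rewrite <- pow2_abs. apply (Rle_trans _ ((2 * AL * Z) ^ 2)).
  - apply pow_incr. split; [apply Rabs_pos|exact HD].
  - assert (row x j * Q <= 3/2 * Q) by (apply Rmult_le_compat_r; auto).
    assert (0 <= AL ^ 2) by apply pow2_ge_0. nra.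
Qed.

Lemma pj_step_le t x j : admissible x -> (j < m)%nat ->
  MU * (P (stp t x) j - P x j)
    <= P x j * row (fun i => stp t x i - x i) j
       + 3/10 * AL * (P x j * row (fun i => x i * XIt t x i ^ 2) j).
Proof.
  intros Hadm Hj. pose proof (admissible_nonneg x Hadm) as Hx. pose proof mu_pos.
  set (D := row (fun i => stp t x i - x i) j). set (Q := row (fun i => x i * XIt t x i ^ 2) j).
  assert (Hrow : row (stp t x) j = row x j + D)
    by (unfold D, row; rewrite <- rsum_plus; apply rsum_ext; intros; ring).
  assert (HP : P (stp t x) j = P x j * exp (D / MU))
    by (rewrite !pj_row, Hrow, <- exp_plus; f_equal; field; lra).
  assert (HD : Rabs (D / MU) <= 1/4).
  { pose proof (Rabs_row_change_le t x j Hx Hj) as HDZ. fold D in HDZ.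
    pose proof (weighted_abs_xi_t_le_row t x j Hx Hj).
    pose proof (row_le_of_admissible x Hadm j Hj). pose proof alpha_pos.
    unfold Rdiv. rewrite Rabs_mult, (Rabs_right (/ MU)) by (left; apply Rinv_0_lt_compat; lra).
    apply (Rmult_le_reg_r MU); [lra|]. rewrite Rmult_assoc, Rinv_l by lra.
    unfold alpha in *. nra. }
  pose proof (exp_le_quadratic _ HD). pose proof (pj_pos x j).
  pose proof (row_change_sq_le t x j Hadm Hj) as HD2. fold D Q in HD2.
  rewrite HP.
  apply (Rle_trans _ (P x j * D + P x j * D ^ 2 / MU)).
  - replace (P x j * D + P x j * D ^ 2 / MU) with (MU * (P x j * (D / MU + (D / MU) ^ 2)))
      by (field; lra).
    apply Rmult_le_compat_l; [lra|]. nra.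
  - assert (Hcoef : 6 * AL ^ 2 / MU = 3/10 * AL) by (unfold alpha; field; lra).
    assert (Hsq : P x j * D ^ 2 / MU <= P x j * (6 * AL ^ 2 * Q) / MU).
    { unfold Rdiv. apply Rmult_le_compat_r; [left; apply Rinv_0_lt_compat; lra|].
      apply Rmult_le_compat_l; lra. }
    replace (P x j * (6 * AL ^ 2 * Q) / MU) with (6 * AL ^ 2 / MU * (P x j * Q)) in Hsq
      by (field; lra).
    rewrite Hcoef in Hsq. lra.
Qed.

Lemma penalty_step_le t x : admissible x ->
  MU * (rsum m (fun j => P (stp t x) j) - rsum m (fun j => P x j))
    <= rsum n (fun i => (stp t x i - x i) * (g x i + 1))
       + 3/10 * AL * rsum n (fun i => x i * XIt t x i ^ 2 * (g x i + 1)).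
Proof.
  intros Hadm. rewrite <- rsum_minus, <- rsum_scal.
  eapply Rle_trans; [apply rsum_le; intros j Hj; apply pj_step_le; auto|].
  rewrite rsum_plus, rsum_scal, !rsum_pj_row. lra.
Qed.

Lemma descent_coord x al g z : 0 <= x -> 0 < al <= 1/80 -> Rabs z <= 1 ->
  z ^ 2 * Rabs g <= z * g -> z ^ 2 * (g + 1) <= 2 * (z * g) ->
  x * (exp (- (al * z)) - 1) * g + 3/10 * al * x * z ^ 2 * (g + 1) <= - (1/3) * al * x * z * g.
Proof.
  intros Hx Hal Hz Habs Hg1.
  assert (Hzg : 0 <= z * g) by (pose proof (pow2_ge_0 z); pose proof (Rabs_pos g); nra).
  assert (Haz : Rabs (al * z) <= 1/4) by (rewrite Rabs_mult, Rabs_right by lra; nra).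
  pose proof (expm1_mul_le _ g Haz) as He.
  assert (Hsq : (al * z) ^ 2 * Rabs g <= al / 80 * (z * g)).
  { replace ((al * z) ^ 2 * Rabs g) with (al ^ 2 * (z ^ 2 * Rabs g)) by ring.
    apply (Rle_trans _ (al ^ 2 * (z * g))); [apply Rmult_le_compat_l; [apply pow2_ge_0|exact Habs]|].
    apply Rmult_le_compat_r; nra. }
  assert (Hcoord : (exp (- (al * z)) - 1) * g + 3/10 * al * z ^ 2 * (g + 1)
                   <= - (1/3) * al * (z * g)) by nra.
  nra.
Qed.

Lemma f_step_le t x : admissible x -> f (stp t x) <= f x - 1/3 * AL * progress t x.
Proof.
  intros Hadm. pose proof (admissible_nonneg x Hadm) as Hx.
  pose proof (penalty_step_le t x Hadm) as Hpen. pose proof alpha_pos. pose proof alpha_le.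
  assert (Hcoord : rsum n (fun i => (stp t x i - x i) * g x i
                                    + 3/10 * AL * (x i * XIt t x i ^ 2 * (g x i + 1)))
                   <= - (1/3) * AL * progress t x).
  { unfold progress. rewrite <- rsum_scal. apply rsum_le; intros i Hi. rewrite step_sub.
    pose proof (descent_coord (x i) AL (g x i) (XIt t x i) (Hx i Hi) ltac:(lra)
                  (Rabs_xi_t_le1 t x i Hi) (xi_t_sq_abs_grad_le t x i Hi)
                  (xi_t_sq_grad1_le t x i Hi)).
    lra. }
  rewrite rsum_plus, rsum_scal in Hcoord.
  assert (rsum n (fun i => (stp t x i - x i) * g x i)
          = rsum n (fun i => (stp t x i - x i) * (g x i + 1)) - (rsum n (stp t x) - rsum n x))
    by (rewrite <- !rsum_minus; apply rsum_ext; intros; ring).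
  unfold f_mu. lra.
Qed.

Definition kl_potential u x := rsum n (fun i => - u i * ln (x i) + x i).

(* Multiplicative updates make [ln x] move by exactly [- alpha xi]. *)
Lemma mirror_step_le u t x : (forall i, (i < n)%nat -> 0 < x i) ->
  AL * rsum n (fun i => XIt t x i * (x i - u i))
    <= kl_potential u x - kl_potential u (stp t x) + AL ^ 2 * rsum n (fun i => x i * XIt t x i ^ 2).
Proof.
  intros Hx. unfold kl_potential.
  rewrite <- !rsum_scal, <- rsum_minus, <- rsum_plus. apply rsum_le; intros i Hi.
  pose proof (Hx i Hi). pose proof (Rabs_alpha_xi_t_le t x i Hi). pose proof alpha_le.
  unfold step. replace (- AL * XIt t x i) with (- (AL * XIt t x i)) by ring.
  set (a := AL * XIt t x i) in *.
  rewrite ln_mult, ln_exp by (auto; apply exp_pos).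
  destruct (expm1_bounds a ltac:(lra)) as [_ Hhi].
  assert (x i * (exp (- a) - 1) <= x i * (- a + a ^ 2)) by (apply Rmult_le_compat_l; lra).
  replace (AL ^ 2 * (x i * XIt t x i ^ 2)) with (x i * a ^ 2) by (unfold a; ring).
  unfold a in *. nra.
Qed.

Lemma f_sub_le_grad u x : f x - f u <= rsum n (fun i => g x i * (x i - u i)).
Proof.
  pose proof mu_pos.
  assert (Htan : forall j, MU * P x j + P x j * (row u j - row x j) <= MU * P u j).
  { intros j. rewrite !pj_row.
    pose proof (exp_tangent_le (/ MU * (row x j - 1)) (/ MU * (row u j - 1))) as Ht.
    replace (MU * exp (/ MU * (row x j - 1)) + exp (/ MU * (row x j - 1)) * (row u j - row x j))
      with (MU * (exp (/ MU * (row x j - 1)) * (1 + (/ MU * (row u j - 1) - / MU * (row x j - 1)))))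
      by (field; lra).
    apply Rmult_le_compat_l; lra. }
  assert (Hsum : MU * rsum m (fun j => P x j) + rsum n (fun i => (u i - x i) * (g x i + 1))
                 <= MU * rsum m (fun j => P u j)).
  { rewrite <- (rsum_pj_row x (fun i => u i - x i)), <- !rsum_scal, <- rsum_plus.
    apply rsum_le; intros j Hj.
    replace (row (fun i => u i - x i) j) with (row u j - row x j)
      by (unfold row; rewrite <- rsum_minus; apply rsum_ext; intros; ring).
    apply Htan. }
  assert (rsum n (fun i => g x i * (x i - u i))
          = - rsum n (fun i => (u i - x i) * (g x i + 1)) - rsum n x + rsum n u)
    by (rewrite <- rsum_opp, <- rsum_minus, <- rsum_plus; apply rsum_ext; intros; ring).
  unfold f_mu. lra.
Qed.

Lemma grad_truncation_le u x i : (i < n)%nat -> 0 <= x i -> 0 <= u i ->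
  g x i * (x i - u i) <= XI x i * (x i - u i) + x i * XI x i * g x i + eps * (x i + u i).
Proof.
  intros Hi Hx Hu. destruct (xi_cases x i Hi) as [[E H1]|[[E H1]|[E [H1 H2]]]]; rewrite E.
  - apply Rabs_le_inv in H1. nra.
  - nra.
  - nra.
Qed.

Lemma step_gain_le u t x : admissible x ->
  AL * rsum n (fun i => XIt t x i * (x i - u i)) + AL * progress t x
    <= kl_potential u x - kl_potential u (stp t x) + 4 * (f x - f (stp t x)).
Proof.
  intros Hadm. pose proof (admissible_nonneg x Hadm) as Hx.
  pose proof (mirror_step_le u t x (proj1 Hadm)). pose proof (f_step_le t x Hadm).
  pose proof (progress_nonneg t x Hx). pose proof alpha_pos. pose proof alpha_le.
  assert (rsum n (fun i => x i * XIt t x i ^ 2) <= progress t x).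
  { apply rsum_le; intros i Hi. pose proof (xi_t_sq_le t x i Hi). rewrite Rmult_assoc.
    apply Rmult_le_compat_l; auto. }
  assert (AL ^ 2 * rsum n (fun i => x i * XIt t x i ^ 2) <= AL / 80 * progress t x).
  { apply (Rle_trans _ (AL ^ 2 * progress t x)); [apply Rmult_le_compat_l; [apply pow2_ge_0|auto]|].
    apply Rmult_le_compat_r; nra. }
  assert (0 <= AL * progress t x) by (apply Rmult_le_pos; lra).
  lra.
Qed.

Lemma one_step_le u x : (forall i, (i < n)%nat -> 0 <= u i) -> admissible x ->
  AL * (f x - f u)
    <= rsum W (fun t => kl_potential u x - kl_potential u (stp t x) + 4 * (f x - f (stp t x)))
       + AL * eps * (rsum n x + rsum n u).
Proof.
  intros Hu Hadm. pose proof (admissible_nonneg x Hadm) as Hx. pose proof alpha_pos.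
  assert (Htrunc : f x - f u <= rsum n (fun i => XI x i * (x i - u i))
                     + rsum n (fun i => x i * XI x i * g x i) + eps * (rsum n x + rsum n u)).
  { eapply Rle_trans; [apply f_sub_le_grad|].
    rewrite <- (rsum_plus n x u), <- rsum_scal, <- !rsum_plus. apply rsum_le; intros i Hi.
    apply grad_truncation_le; auto. }
  assert (Hxi : rsum n (fun i => XI x i * (x i - u i))
                = rsum W (fun t => rsum n (fun i => XIt t x i * (x i - u i)))).
  { rewrite rsum_swap. apply rsum_ext; intros i Hi. rewrite <- (rsum_xi_t x i Hi).
    rewrite Rmult_comm, <- rsum_scal. apply rsum_ext; intros; ring. }
  assert (Hprog : rsum n (fun i => x i * XI x i * g x i) = rsum W (fun t => progress t x)).
  { unfold progress. rewrite rsum_swap. apply rsum_ext; intros i Hi.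
    rewrite <- (rsum_xi_t x i Hi).
    transitivity ((x i * g x i) * rsum W (fun t => XIt t x i)); [ring|].
    rewrite <- rsum_scal. apply rsum_ext; intros; ring. }
  assert (Hgain : AL * rsum n (fun i => XI x i * (x i - u i)) + AL * rsum n (fun i => x i * XI x i * g x i)
                  <= rsum W (fun t => kl_potential u x - kl_potential u (stp t x)
                                      + 4 * (f x - f (stp t x)))).
  { rewrite Hxi, Hprog, <- !rsum_scal, <- rsum_plus.
    apply rsum_le; intros t _. apply step_gain_le; assumption. }
  apply (Rmult_le_compat_l AL) in Htrunc; lra.
Qed.

Lemma expect_f_iter_avg k x : expect_f m n A eps k x = iter_avg W stp k f x.
Proof.
  revert x; induction k as [|k IH]; intros x; [reflexivity|].
  simpl. unfold avg. f_equal. apply rsum_ext; intros; apply IH.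
Qed.

Lemma f_step_nonincreasing t x : admissible x -> f (stp t x) <= f x.
Proof.
  intros Hadm. pose proof (f_step_le t x Hadm).
  pose proof (progress_nonneg t x (admissible_nonneg x Hadm)). pose proof alpha_pos.
  assert (0 <= AL * progress t x) by (apply Rmult_le_pos; lra). lra.
Qed.

Lemma admissible_step t x : admissible x -> admissible (stp t x).
Proof.
  intros Hadm. split.
  - intros i Hi. unfold step. apply Rmult_lt_0_compat; [apply Hadm, Hi|apply exp_pos].
  - pose proof (f_step_nonincreasing t x Hadm). destruct Hadm; lra.
Qed.

Lemma penalty_small y : (forall j, (j < m)%nat -> row y j <= 1 - eps / 2) ->
  MU * rsum m (fun j => P y j) <= eps ^ 2 / (4 * INR n).
Proof.
  intros Hy. pose proof mu_pos. pose proof mu_le. pose proof nm_eps_ge2.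
  pose proof INR_n_ge1. pose proof INR_m_ge1.
  assert (Hterm : forall j, (j < m)%nat -> P y j <= / nm_eps ^ 2).
  { intros j Hj. rewrite pj_row, <- exp_half_eps_div_mu, <- exp_Ropp.
    apply exp_le_exp. pose proof (Hy j Hj).
    replace (- (eps / MU / 2)) with (/ MU * (- (eps / 2))) by (field; lra).
    apply Rmult_le_compat_l; [left; apply Rinv_0_lt_compat|]; lra. }
  assert (Hsum : rsum m (fun j => P y j) <= INR m * / nm_eps ^ 2)
    by (rewrite <- rsum_const; apply rsum_le; exact Hterm).
  assert (Hval : INR m * / nm_eps ^ 2 = eps ^ 2 / (INR n ^ 2 * INR m))
    by (unfold nm_eps; field; lra).
  assert (eps ^ 2 / (INR n ^ 2 * INR m) <= eps ^ 2 / INR n).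
  { unfold Rdiv. apply Rmult_le_compat_l; [apply pow2_ge_0|].
    apply Rinv_le_contravar; [lra|simpl; nra]. }
  assert (0 <= rsum m (fun j => P y j)) by (apply rsum_nonneg; intros; left; apply pj_pos).
  apply (Rle_trans _ (eps / 2 * (eps ^ 2 / INR n))); [apply Rmult_le_compat; lra|].
  replace (eps / 2 * (eps ^ 2 / INR n)) with (eps / 2 * eps ^ 2 / INR n) by (field; lra).
  replace (eps ^ 2 / (4 * INR n)) with (1 / 4 * eps ^ 2 / INR n) by (field; lra).
  apply Rmult_le_compat_r; [left; apply Rinv_0_lt_compat; lra|].
  apply Rmult_le_compat_r; [apply pow2_ge_0|lra].
Qed.

Lemma kl_potential_ge u y : (forall i, (i < n)%nat -> 0 <= u i) ->
  (forall i, (i < n)%nat -> 0 < y i) ->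
  rsum n (fun i => u i - u i * ln (u i)) <= kl_potential u y.
Proof.
  intros Hu Hy. apply rsum_le; intros i Hi. pose proof (Hy i Hi). pose proof (Hu i Hi).
  destruct (Req_dec (u i) 0) as [->|Hne]; [lra|].
  assert (Hln : ln (y i / u i) <= y i / u i - 1) by (apply ln_le_sub1, Rdiv_lt_0_compat; lra).
  unfold Rdiv in Hln. rewrite ln_mult, ln_Rinv in Hln by (try apply Rinv_0_lt_compat; lra).
  apply (Rmult_le_compat_l (u i)) in Hln; [|lra].
  replace (u i * (y i * / u i - 1)) with (y i - u i) in Hln by (field; lra). lra.
Qed.

Lemma kl_potential_gap_le c u y : 0 < c -> (forall i, (i < n)%nat -> 0 <= u i) ->
  (forall i, (i < n)%nat -> 0 < y i) -> (forall i, (i < n)%nat -> u i <= c * y i) ->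
  kl_potential u y - rsum n (fun i => u i - u i * ln (u i)) <= ln c * rsum n u + rsum n y.
Proof.
  intros Hc Hu Hy Huy. unfold kl_potential.
  rewrite <- rsum_minus, <- rsum_scal, <- rsum_plus. apply rsum_le; intros i Hi.
  pose proof (Hu i Hi). pose proof (Hy i Hi). pose proof (Huy i Hi).
  destruct (Req_dec (u i) 0) as [->|Hne]; [lra|].
  assert (ln (u i) <= ln c + ln (y i)) by (rewrite <- ln_mult by lra; apply ln_le_ln; lra).
  assert (u i * ln (u i) <= u i * (ln c + ln (y i))) by (apply Rmult_le_compat_l; lra).
  nra.
Qed.

Notation X0 := (x0 m n A eps).

Lemma x0_pos i : (i < n)%nat -> 0 < X0 i.
Proof.
  intros Hi. pose proof (Hcol i Hi). pose proof INR_n_ge1.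
  apply Rdiv_lt_0_compat; [lra|nra].
Qed.

Lemma row_x0_le j : (j < m)%nat -> row X0 j <= 1 - eps / 2.
Proof.
  intros Hj. pose proof INR_n_ge1.
  replace (1 - eps / 2) with (INR n * ((1 - eps / 2) / INR n)) by (field; lra).
  rewrite <- rsum_const. apply rsum_le; intros i Hi. unfold x0.
  pose proof (Hcol i Hi). pose proof (entry_le_colnorm i j Hi Hj). pose proof (HA j i Hj Hi).
  replace (A j i * ((1 - eps / 2) / (INR n * colnorm m A i)))
    with (A j i / colnorm m A i * ((1 - eps / 2) / INR n)) by (field; lra).
  rewrite <- (Rmult_1_l ((1 - eps / 2) / INR n)) at 2.
  apply Rmult_le_compat_r; [unfold Rdiv; apply Rmult_le_pos; [|left; apply Rinv_0_lt_compat]; lra|].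
  apply (Rmult_le_reg_r (colnorm m A i)); [lra|]. field_simplify; lra.
Qed.

Lemma admissible_x0 i0 : (i0 < n)%nat -> colnorm m A i0 = 1 -> admissible X0.
Proof.
  intros Hi0 Hc. split; [apply x0_pos|]. pose proof INR_n_ge1.
  pose proof (penalty_small X0 row_x0_le).
  assert (Hi0_le : X0 i0 <= rsum n X0)
    by (apply rsum_ge_term; auto; intros; left; apply x0_pos; auto).
  unfold x0 in Hi0_le at 1. rewrite Hc, Rmult_1_r in Hi0_le.
  assert (eps ^ 2 / (4 * INR n) <= (1 - eps / 2) / INR n).
  { unfold Rdiv. rewrite Rinv_mult.
    replace (eps ^ 2 * (/ 4 * / INR n)) with (eps ^ 2 / 4 * / INR n) by (field; lra).
    apply Rmult_le_compat_r; [left; apply Rinv_0_lt_compat; lra|nra]. }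
  unfold f_mu. lra.
Qed.

Section Optimum.
Variables (OPT : R) (xs : nat -> R) (i0 : nat).
Hypothesis HOPT : forall x, feasible m n A x -> rsum n x <= OPT.
Hypothesis Hxs : feasible m n A xs.
Hypothesis Hxs_sum : rsum n xs = OPT.
Hypothesis Hi0 : (i0 < n)%nat.
Hypothesis Hc0 : colnorm m A i0 = 1.

(* The unit vector at [i0] is feasible. *)
Lemma OPT_ge1 : 1 <= OPT.
Proof.
  set (e := fun i => 1 * (if Nat.eq_dec i i0 then 1 else 0)).
  replace 1 with (rsum n e) at 1 by (apply rsum_indicator; assumption).
  apply HOPT. split.
  - intros i _. unfold e. destruct Nat.eq_dec; lra.
  - intros j Hj. unfold e.
    rewrite (rsum_ext n _ (fun i => A j i * (if Nat.eq_dec i i0 then 1 else 0))) by (intros; ring).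
    rewrite rsum_indicator, <- Hc0 by assumption. apply entry_le_colnorm; assumption.
Qed.

Lemma sum_le_of_admissible x : admissible x -> rsum n x <= (1 + eps) * OPT.
Proof.
  intros Hadm. set (y := fun i => / (1 + eps) * x i).
  assert (Hy : rsum n y <= OPT).
  { apply HOPT. split.
    - intros i Hi. apply Rmult_le_pos; [left; apply Rinv_0_lt_compat; lra|].
      apply admissible_nonneg; assumption.
    - intros j Hj. pose proof (row_le_of_admissible x Hadm j Hj) as Hrow. unfold row in Hrow.
      rewrite (rsum_ext n _ (fun i => / (1 + eps) * (A j i * x i))) by (intros; unfold y; ring).
      rewrite rsum_scal. apply (Rmult_le_reg_l (1 + eps)); [lra|].
      rewrite <- Rmult_assoc, Rinv_r, Rmult_1_l by lra. lra. }
  unfold y in Hy. rewrite rsum_scal in Hy.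
  apply (Rmult_le_compat_l (1 + eps)) in Hy; [|lra].
  rewrite <- Rmult_assoc, Rinv_r, Rmult_1_l in Hy by lra. exact Hy.
Qed.

Definition scaled_opt i := (1 - eps / 2) * xs i.

Lemma scaled_opt_nonneg i : (i < n)%nat -> 0 <= scaled_opt i.
Proof. intros Hi. destruct Hxs as [Hnn _]. pose proof (Hnn i Hi). unfold scaled_opt. nra. Qed.

Lemma rsum_scaled_opt : rsum n scaled_opt = (1 - eps / 2) * OPT.
Proof. unfold scaled_opt. rewrite rsum_scal, Hxs_sum. reflexivity. Qed.

Lemma f_scaled_opt_le : f scaled_opt <= - (1 - eps / 2) * OPT + eps / 8.
Proof.
  assert (Hrow : forall j, (j < m)%nat -> row scaled_opt j <= 1 - eps / 2).
  { intros j Hj. destruct Hxs as [_ Hle]. pose proof (Hle j Hj).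
    unfold row, scaled_opt. rewrite (rsum_ext n _ (fun i => (1 - eps / 2) * (A j i * xs i)))
      by (intros; ring).
    rewrite rsum_scal. nra. }
  pose proof (penalty_small scaled_opt Hrow). pose proof INR_n_ge1.
  assert (eps ^ 2 / (4 * INR n) <= eps / 8).
  { apply (Rmult_le_reg_r (4 * INR n)); [lra|]. field_simplify; nra. }
  unfold f_mu. rewrite rsum_scaled_opt. lra.
Qed.

(* The optimal [xs] satisfies [A j i * xs i <= 1], i.e. [xs i <= 1 / colnorm],
   so [scaled_opt] is dominated by [n * x0]. *)
Lemma scaled_opt_le_n_x0 i : (i < n)%nat -> scaled_opt i <= INR n * X0 i.
Proof.
  intros Hi. destruct Hxs as [Hnn Hle]. pose proof INR_n_ge1. pose proof (Hcol i Hi).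
  destruct (colnorm_attained i Hi) as [j [Hj Ej]].
  assert (HAx : A j i * xs i <= 1).
  { eapply Rle_trans; [|apply (Hle j Hj)].
    apply (rsum_ge_term n (fun i => A j i * xs i)); auto.
    intros k Hk. apply Rmult_le_pos; auto. }
  rewrite Ej in HAx. unfold scaled_opt, x0.
  replace (INR n * ((1 - eps / 2) / (INR n * colnorm m A i)))
    with ((1 - eps / 2) * / colnorm m A i) by (field; lra).
  apply Rmult_le_compat_l; [lra|].
  apply (Rmult_le_reg_r (colnorm m A i)); [lra|]. rewrite Rinv_l; lra.
Qed.

Lemma kl_x0_gap_le :
  kl_potential scaled_opt X0 - rsum n (fun i => scaled_opt i - scaled_opt i * ln (scaled_opt i))
    <= OPT * ln (2 * INR n) + OPT.
Proof.
  pose proof INR_n_ge1. pose proof OPT_ge1.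
  pose proof (kl_potential_gap_le (INR n) scaled_opt X0 ltac:(lra) scaled_opt_nonneg x0_pos
                scaled_opt_le_n_x0) as Hgap.
  assert (Hx0 : rsum n X0 <= OPT).
  { apply HOPT. split; [intros; left; apply x0_pos; auto|].
    intros j Hj. pose proof (row_x0_le j Hj). unfold row in *. lra. }
  assert (Hln : 0 <= ln (INR n) <= ln (2 * INR n)) by (split; [apply ln_nonneg|apply ln_le_ln]; lra).
  rewrite rsum_scaled_opt in Hgap.
  assert (ln (INR n) * ((1 - eps / 2) * OPT) <= OPT * ln (2 * INR n)).
  { apply (Rle_trans _ (ln (INR n) * OPT)); [apply Rmult_le_compat_l; nra|].
    rewrite Rmult_comm. apply Rmult_le_compat_l; lra. }
  lra.
Qed.

Definition excess_level := f scaled_opt + eps * ((1 + eps) * OPT + rsum n scaled_opt).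

Definition drift_potential y := kl_potential scaled_opt y + 4 * f y.

Lemma drift_le y : admissible y ->
  AL * (f y - excess_level) <= rsum W (fun t => drift_potential y - drift_potential (stp t y)).
Proof.
  intros Hadm. pose proof (one_step_le scaled_opt y scaled_opt_nonneg Hadm).
  pose proof (sum_le_of_admissible y Hadm). pose proof alpha_pos.
  rewrite (rsum_ext W _ (fun t => kl_potential scaled_opt y - kl_potential scaled_opt (stp t y)
                                  + 4 * (f y - f (stp t y))))
    by (intros; unfold drift_potential; ring).
  assert (AL * eps * rsum n y <= AL * eps * ((1 + eps) * OPT))
    by (apply Rmult_le_compat_l; [apply Rmult_le_pos|]; lra).
  unfold excess_level. lra.
Qed.

Lemma excess_level_le : excess_level <= - OPT + 23/8 * eps * OPT.
Proof.
  pose proof f_scaled_opt_le. pose proof OPT_ge1. unfold excess_level. rewrite rsum_scaled_opt.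
  assert (eps <= eps * OPT) by nra.
  assert (eps * eps * OPT <= eps * OPT / 2) by (assert (0 <= eps * OPT) by nra; nra).
  nra.
Qed.

Lemma alpha_T_ge : 10 * INR W * ln (2 * INR n) / eps <= AL * INR (T m n eps).
Proof.
  pose proof (nceil_ge (10 * INR W * ln (2 * INR n) / (AL * eps))) as HT. fold (T m n eps) in HT.
  pose proof alpha_pos.
  apply (Rmult_le_compat_l AL) in HT; [|lra]. eapply Rle_trans; [|exact HT].
  right; field; lra.
Qed.

Lemma expect_excess_le :
  AL * INR (T m n eps) * (iter_avg W stp (T m n eps) f X0 - excess_level)
    <= INR W * OPT * (ln (2 * INR n) + 7).
Proof.
  set (k := T m n eps). pose proof (admissible_x0 i0 Hi0 Hc0) as Hx0.
  pose proof (iter_avg_drift W stp admissible w_ge1 admissible_step AL excess_level f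
                drift_potential alpha_pos f_step_nonincreasing drift_le k X0 Hx0) as Hdrift.
  rewrite (iter_avg_ext W stp k drift_potential
             (fun y => 1 * kl_potential scaled_opt y + 4 * f y)) in Hdrift
    by (intros; unfold drift_potential; ring).
  rewrite iter_avg_lin in Hdrift.
  pose proof (iter_avg_ge W stp admissible w_ge1 admissible_step _ _
                (fun y Hy => kl_potential_ge scaled_opt y scaled_opt_nonneg (proj1 Hy)) k X0 Hx0) as Hkl.
  assert (Hf : - ((1 + eps) * OPT) <= iter_avg W stp k f X0).
  { apply (iter_avg_ge W stp admissible w_ge1 admissible_step); [|exact Hx0].
    intros y Hy. pose proof (sum_le_of_admissible y Hy). pose proof mu_pos.
    assert (0 <= rsum m (fun j => P y j)) by (apply rsum_nonneg; intros; left; apply pj_pos).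
    unfold f_mu. nra. }
  pose proof kl_x0_gap_le. pose proof w_ge1. pose proof OPT_ge1.
  assert (Hf0 : f X0 <= 0) by apply Hx0. unfold drift_potential in Hdrift.
  set (Ekl := iter_avg W stp k (kl_potential scaled_opt) X0) in *.
  set (Ef := iter_avg W stp k f X0) in *.
  assert (kl_potential scaled_opt X0 - Ekl <= OPT * ln (2 * INR n) + OPT) by lra.
  assert (f X0 - Ef <= 3/2 * OPT) by nra.
  assert (INR W * (kl_potential scaled_opt X0 + 4 * f X0 - (1 * Ekl + 4 * Ef))
          <= INR W * (OPT * ln (2 * INR n) + OPT + 4 * (3/2 * OPT)))
    by (apply Rmult_le_compat_l; lra).
  lra.
Qed.

(* An excess above [excess_level] of more than [3/2 eps OPT] would contradict
   [expect_excess_le], because [alpha T >= 10 w ln(2n) / eps] and [ln (2n) >= 1/2]. *)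
Lemma expect_f_T_le : iter_avg W stp (T m n eps) f X0 <= - (1 - 5 * eps) * OPT.
Proof.
  pose proof excess_level_le. pose proof OPT_ge1. pose proof w_ge1.
  pose proof alpha_T_ge as HT. pose proof expect_excess_le as Hex.
  set (E := iter_avg W stp (T m n eps) f X0) in *. set (c := excess_level) in *.
  set (L := ln (2 * INR n)) in *.
  assert (HL : 1/2 <= L) by (pose proof half_le_ln2; pose proof INR_n_ge1;
                             assert (ln 2 <= L) by (apply ln_le_ln; lra); lra).
  assert (HeO : 0 <= eps * OPT) by (apply Rmult_le_pos; lra).
  destruct (Rle_dec E c) as [Hle|Hgt]; [lra|].
  assert (H10 : 10 * INR W * L / eps * (E - c) <= INR W * OPT * (L + 7))
    by (eapply Rle_trans; [apply Rmult_le_compat_r; [lra|exact HT]|exact Hex]).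
  assert (H11 : 10 * L * (E - c) <= eps * OPT * (L + 7)).
  { apply (Rmult_le_reg_l (INR W / eps)); [apply Rdiv_lt_0_compat; lra|].
    replace (INR W / eps * (10 * L * (E - c))) with (10 * INR W * L / eps * (E - c)) by (field; lra).
    replace (INR W / eps * (eps * OPT * (L + 7))) with (INR W * OPT * (L + 7)) by (field; lra).
    exact H10. }
  assert (eps * OPT * (L + 7) <= 10 * L * (3/2 * eps * OPT)) by nra.
  assert (E - c <= 3/2 * eps * OPT) by (apply (Rmult_le_reg_l (10 * L)); lra).
  lra.
Qed.

End Optimum.

End Packing.

Theorem theorem2p3 (m n : nat) (A : nat -> nat -> R) (eps OPT : R) :
  0 < eps <= 1 / 2 ->
  (forall j i, (j < m)%nat -> (i < n)%nat -> 0 <= A j i) ->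
  (forall i, (i < n)%nat -> exists j, (j < m)%nat /\ A j i <> 0) ->
  (forall i, (i < n)%nat -> 1 <= colnorm m A i) ->
  (exists i, (i < n)%nat /\ colnorm m A i = 1) ->
  is_OPT m n A OPT ->
  expect_f m n A eps (T m n eps) (x0 m n A eps) <= - (1 - 5 * eps) * OPT.
Proof.
  intros Heps HA Hnz Hcol [i0 [Hi0 Hc0]] [HOPT [xs [Hxs Hxs_sum]]].
  destruct (Hnz i0 Hi0) as [j0 [Hj0 _]].
  assert (Hm : (1 <= m)%nat) by lia.
  assert (Hn : (1 <= n)%nat) by lia.
  rewrite expect_f_iter_avg.
  apply (expect_f_T_le m n A eps Heps HA Hm Hn Hcol OPT xs i0); assumption.
Qed.
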